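(* Let $n\geqslant 2$ and fix a caterpillar species tree $S$ with $n$ leaves labeled by a set $X$. As $G$ ranges over all $n!/2$ caterpillar gene trees with leaves bijectively labeled by $X$, the distinct roadblock sets $B_{G,S}$ are in bijection with the monotonic lattice paths from $(0,0)$ to $(n-1,n-1)$ on the $(n-1)\times(n-1)$ lattice that do not cross above the diagonal $y=x$; in particular there are $C_{n-1}=\frac{1}{n}\binom{2n-2}{n-1}$ distinct roadblock sets.
   Context: All trees are binary, rooted, leaf-labeled. A caterpillar tree with $n$ leaves is a tree in which some internal node is descended from all other internal nodes. Its canonical label vector $(x_1,\dots,x_n)$ has $x_1,x_2$ the labels of the two leaves of the cherry (the unique internal node with exactly two descendant leaves) and, for $3\leqslant i\leqslant n$, $x_i$ the label of the leaf separated from the root by $n-i+1$ edges; vectors differing only by swapping $x_1,x_2$ describe the same tree. For caterpillars $G,S$ on the same label set with canonical vectors $\mathbf g,\mathbf s$, let $\sigma(x)$ be the index of label $x$ in $\mathbf s$, let $F(j)=\max\{\sigma(g_1),\dots,\sigma(g_{j+1})\}-1$ for $1\leqslant j\leqslant n-1$, and define the roadblock set $B_{G,S}=\{(i,j)\in\mathbb Z^2: 1\leqslant j\leqslant i\leqslant n-1,\ i<F(j)\}$. A monotonic path is a sequence of lattice points with steps $(1,0)$ or $(0,1)$; it does not cross above $y=x$ if all its points $(x,y)$ satisfy $y\leqslant x$. *)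

From mathcomp Require Import all_boot.
Set Implicit Arguments. Unset Strict Implicit. Unset Printing Implicit Defensive.

(* A caterpillar tree on the finite label set X (n = #|X| leaves) is given by a
   canonical label vector (x_1,...,x_n): an n-tuple of distinct labels
   (x_i is stored at 0-based position i-1).  Vectors differing by swapping
   x_1,x_2 describe the same tree. *)
Definition canon_vec (X : finType) (v : #|X|.-tuple X) : bool := uniq v.

Definition sigma (X : finType) (s : #|X|.-tuple X) (x : X) : nat :=
  (index x s).+1.

Definition Fmax (X : finType) (s g : #|X|.-tuple X) (j : nat) : nat :=
  (\max_(x <- take j.+1 g) sigma s x) - 1.

Definition roadblock (X : finType) (g s : #|X|.-tuple X)
  : {set 'I_#|X| * 'I_#|X|} :=
  [set p : 'I_#|X| * 'I_#|X| |
     [&& 1 <= nat_of_ord p.2, nat_of_ord p.2 <= nat_of_ord p.1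
       & nat_of_ord p.1 < Fmax s g p.2]].

Definition roadblock_sets (X : finType) (s : #|X|.-tuple X)
  : {set {set 'I_#|X| * 'I_#|X|}} :=
  [set B | [exists g : #|X|.-tuple X, canon_vec g && (B == roadblock g s)]].

Definition lattice_step (a b : nat * nat) : bool :=
  ((b.1 == a.1.+1) && (b.2 == a.2)) || ((b.1 == a.1) && (b.2 == a.2.+1)).

Definition dyck_path (m : nat) (p : seq (nat * nat)) : bool :=
  match p with
  | [::] => false
  | q :: r =>
      [&& q == (0, 0), path lattice_step q r, last q r == (m, m)
        & all (fun z : nat * nat => z.2 <= z.1) p]
  end.

From mathcomp Require Import all_boot zify.
Set Implicit Arguments. Unset Strict Implicit. Unset Printing Implicit Defensive.

(* Relabel the gene vector by the positions of its labels in the species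
   vector: this gives a permutation w of {0, ..., n - 1}, and F(j) is the
   maximum of w_0, ..., w_j.  Column j of the roadblock set is the interval
   j <= i < F(j), so B_{G,S} determines and is determined by the sequence
   u_(j-1) = F(j), 1 <= j <= n - 1.  The prefix maxima of permutations are
   exactly the nondecreasing sequences with j <= u_(j-1) and u_(n-2) = n - 1,
   i.e. the columns of the up-steps of the monotone paths from (0,0) to
   (n-1,n-1) below the diagonal.  Splitting these paths by their first step
   yields the ballot numbers, and with m = n - 1 the count is
   C(2m,m) - C(2m,m+1) = C(2m,m)/(m+1). *)

Section Rises.

Variable m : nat.

(* [rises x y us] : [us] lists the columns of the successive up-steps of a
   monotone lattice path from (x, y) to (m, m) that stays weakly below the
   diagonal. *)
Fixpoint rises (x y : nat) (us : seq nat) : bool :=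
  if us is u :: t then [&& x <= u, y < u & rises u y.+1 t] else (x == m) && (y == m).

Lemma risesP x y us :
  reflect [/\ sorted leq (x :: us), forall i, i < size us -> y + i < nth 0 us i,
              y + size us = m & last x us = m]
          (rises x y us).
Proof.
elim: us x y => [|u t IH] x y /=.
  rewrite addn0; apply: (iffP andP) => [[/eqP-> /eqP->]|[_ _ -> ->]] //.
apply: (iffP and3P) => [[xu yu /IH [st lo sz la]]|[/andP[xu st] lo sz la]].
  split; rewrite ?xu ?la //; last by rewrite addnS -addSn.
  by case=> [|i] /=; rewrite ?addn0 // -addSnnS; apply: lo.
split=> //; first by have := lo 0; rewrite addn0; apply.
apply/IH; split=> //; last by rewrite addSn -addnS.
by move=> i ti; rewrite addSnnS; apply: (lo i.+1).
Qed.

Lemma rises_le x y us : rises x y us -> all (leq^~ m) (x :: us).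
Proof.
elim: us x y => [|u t IH] x y /=; first by case/andP=> /eqP-> _; rewrite leqnn.
by case/and3P=> xu _ /IH /andP[um tm]; rewrite (leq_trans xu um) um.
Qed.

Lemma rises_start x y us : rises x y us -> x <= m.
Proof. by case/rises_le/andP. Qed.

Lemma rises_cons x y u t :
  rises x y (u :: t) = (u == x) && (y < x) && rises x y.+1 t || rises x.+1 y (u :: t).
Proof.
rewrite /= leq_eqVlt eq_sym.
by case: eqVneq => [->|_]; rewrite ?ltnn ?andbF ?orbF.
Qed.

Lemma rises_right x y us : y <= x -> rises x.+1 y us -> rises x y us.
Proof.
case: us => [|u t] yx; last by move=> r; rewrite rises_cons r orbT.
by case/andP=> /eqP <- /eqP; lia.
Qed.

Lemma rises_start0 x us : rises x 0 us -> rises 0 0 us.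
Proof. by elim: x => // x IH /(rises_right (leq0n x)); apply: IH. Qed.

End Rises.

Lemma mem_map_cons (T : eqType) (c : T) (L : seq (seq T)) us :
  (us \in [seq c :: t | t <- L]) = if us is u :: t then (u == c) && (t \in L) else false.
Proof.
case: us => [|u t]; first by apply/mapP=> -[].
apply/mapP/andP=> [[t' tL [-> ->]]|[/eqP-> tL]]; last by exists t.
by rewrite eqxx.
Qed.

Section RisesEnum.

Variable m : nat.

(* [rises_enum a b] lists the rise sequences from (m - b, m - a): the path
   either rises at once (allowed only if b <= a) or first steps right. *)
Fixpoint rises_enum (a : nat) : nat -> seq (seq nat) :=
  if a is a'.+1 then
    fix rises_enum_a b :=
      (if b <= a' then map (cons (m - b)) (rises_enum a' b) else [::]) ++
      (if b is b'.+1 then rises_enum_a b' else [::])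
  else fun=> [:: [::]].

Lemma rises_enumS a b :
  rises_enum a.+1 b =
    (if b <= a then map (cons (m - b)) (rises_enum a b) else [::]) ++
    (if b is b'.+1 then rises_enum a.+1 b' else [::]).
Proof. by case: b. Qed.

Lemma mem_rises_enum a b us :
  b <= a <= m -> (us \in rises_enum a b) = rises m (m - b) (m - a) us.
Proof.
elim: a b us => [|a IHa] b us /andP[ba am].
  have -> : b = 0 by lia.
  case: us => [|u t]; rewrite subn0 inE /=; first by rewrite !eqxx.
  by apply/esym/negP=> /and3P[_ mu /rises_start]; rewrite leqNgt mu.
have e : (m - a.+1).+1 = m - a by lia.
elim: b us ba => [|b IHb] us ba; rewrite rises_enumS mem_cat.
  rewrite mem_map_cons /=; case: us => [|u t].
    by apply/esym/andP=> -[_ /eqP]; lia.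
  rewrite rises_cons (IHa 0) ?(ltnW am) // e !subn0 leq_subr andbT in_nil orbF.
  suff /negbTE-> : ~~ rises m m.+1 (m - a.+1) (u :: t) by rewrite orbF.
  by apply/negP=> /rises_start; rewrite ltnn.
rewrite (IHb _ (ltnW ba)); case: us => [|u t].
  have nm : (m - a.+1 == m) = false by lia.
  by rewrite /= nm !andbF orbF; case: ifP; rewrite ?mem_map_cons.
rewrite [RHS]rises_cons e.
have -> : (m - b.+1).+1 = m - b by lia.
have -> : (m - a <= m - b.+1) = (b < a) by lia.
case: ifP => [lt_ba|_]; last by rewrite in_nil andbF.
by rewrite mem_map_cons andbT IHa ?lt_ba ?(ltnW am).
Qed.

Lemma uniq_rises_enum a b : b <= a <= m -> uniq (rises_enum a b).
Proof.
have cons_inj c : injective (cons c : seq nat -> seq nat) by move=> ? ? [].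
elim: a b => [|a IHa] b /andP[ba am] //.
elim: b ba => [|b IHb] ba; rewrite rises_enumS cat_uniq.
  by rewrite /= map_inj_uniq ?IHa ?(ltnW am) ?andbT.
rewrite IHb ?(ltnW ba) // andbT; case: ifP => [lt_ba|_]; last by apply/hasPn.
rewrite map_inj_uniq ?IHa ?lt_ba ?(ltnW am) //.
apply/hasPn=> -[|u t]; rewrite mem_map_cons //.
rewrite mem_rises_enum ?(ltnW ba) ?(ltnW am) // => /and3P[bu _ _].
by apply/nandP; left; apply/eqP; lia.
Qed.

Lemma size_rises_enum a b :
  b <= a -> size (rises_enum a b) + 'C(a + b, a.+1) = 'C(a + b, b).
Proof.
elim: a b => [|a IHa] b ba; first by have -> : b = 0 by lia.
elim: b ba => [|b IHb] ba; rewrite rises_enumS size_cat.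
  rewrite /= size_map !addn0 !bin0 bin_small //.
  by have := IHa 0 (leq0n a); rewrite !addn0 bin0 bin_small // addn0.
rewrite (_ : a.+1 + b.+1 = (a + b).+2) ?addnS // !(binS (a + b).+1).
have := IHb (ltnW ba); rewrite addSn.
case: ltnP => [lt_ba|ab]; last by rewrite (_ : b = a) ?add0n; lia.
by rewrite size_map; have := IHa b.+1 lt_ba; rewrite addnS; lia.
Qed.

Lemma size_rises_enum_diag : size (rises_enum m m) = 'C(m.*2, m) %/ m.+1.
Proof.
have := size_rises_enum (leqnn m); have := mul_bin_left m.*2 m.
rewrite -addnn addnK => h1 h2.
have -> : 'C(m + m, m) = m.+1 * size (rises_enum m m) by nia.
by rewrite mulKn.
Qed.

End RisesEnum.

Section DyckPaths.

Variable m : nat.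

Fixpoint hrun (x y c : nat) : seq (nat * nat) :=
  if c is c'.+1 then (x.+1, y) :: hrun x.+1 y c' else [::].

Fixpoint path_of_rises (x y : nat) (us : seq nat) : seq (nat * nat) :=
  if us is u :: t then hrun x y (u - x) ++ (u, y.+1) :: path_of_rises u y.+1 t
  else hrun x y (m - x).

Fixpoint rises_of_path (y : nat) (r : seq (nat * nat)) : seq nat :=
  if r is z :: r' then
    if z.2 == y.+1 then z.1 :: rises_of_path z.2 r' else rises_of_path z.2 r'
  else [::].

Definition under_diag (z : nat * nat) : bool := z.2 <= z.1.

Lemma rises_of_path_hrun x y c r :
  rises_of_path y (hrun x y c ++ r) = rises_of_path y r.
Proof.
elim: c x => [|c IH] x //=.
by rewrite ifN_eq ?IH // neq_ltn ltnSn.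
Qed.

Lemma path_of_risesK x y us : rises_of_path y (path_of_rises x y us) = us.
Proof.
elim: us x y => [|u t IH] x y /=; last by rewrite rises_of_path_hrun /= eqxx IH.
by rewrite -[hrun _ _ _]cats0 rises_of_path_hrun.
Qed.

Lemma hrun_lattice x y c : y <= x ->
  [/\ path lattice_step (x, y) (hrun x y c), last (x, y) (hrun x y c) = (x + c, y)
    & all under_diag (hrun x y c)].
Proof.
elim: c x => [|c IH] x yx /=; first by rewrite addn0.
have [-> -> ->] := IH x.+1 (leqW yx).
by rewrite /lattice_step /under_diag /= !eqxx addnS (leqW yx).
Qed.

Lemma path_of_rises_lattice x y us : rises m x y us -> y <= x ->
  [&& path lattice_step (x, y) (path_of_rises x y us),
      last (x, y) (path_of_rises x y us) == (m, m)
    & all under_diag (path_of_rises x y us)].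
Proof.
elim: us x y => [|u t IH] x y /=.
  by case/andP=> /eqP-> /eqP-> _; rewrite subnn /= eqxx.
case/and3P=> xu yu rt yx.
have [p1 l1 a1] := hrun_lattice (u - x) yx; have /and3P[p2 l2 a2] := IH _ _ rt yu.
rewrite cat_path last_cat all_cat p1 l1 a1 subnKC //= l2 a2 p2.
by rewrite /lattice_step /under_diag /= !eqxx orbT yu.
Qed.

Lemma path_of_rises_right x y us :
  rises m x.+1 y us -> path_of_rises x y us = (x.+1, y) :: path_of_rises x.+1 y us.
Proof.
case: us => [|u t] /=; first by case/andP=> /eqP <- _; rewrite subSnn subSS subnn.
by case/and3P=> xu _ _; rewrite -(subnSK xu).
Qed.

Lemma rises_of_lattice_path x y r :
  path lattice_step (x, y) r -> last (x, y) r = (m, m) -> all under_diag ((x, y) :: r) ->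
  rises m x y (rises_of_path y r) /\ path_of_rises x y (rises_of_path y r) = r.
Proof.
elim: r x y => [|[a b] r IH] x y /=; first by move=> _ [-> ->]; rewrite !eqxx subnn.
case/andP=> step pr lr /and3P[yx ba ar].
have [rr rK] := IH a b pr lr (introT andP (conj ba ar)).
case/orP: step => /andP[/= /eqP ea /eqP eb]; subst a b.
  rewrite ifN_eq; last by rewrite neq_ltn ltnSn.
  by split; [apply: rises_right | rewrite path_of_rises_right ?rK].
by rewrite eqxx /= leqnn subnn rK; split=> //; apply/and3P.
Qed.

Definition dyck_of_rises (u : seq nat) : seq (nat * nat) := (0, 0) :: path_of_rises 0 0 u.

Lemma dyck_of_rises_inj : injective dyck_of_rises.
Proof. by move=> u v [] /(congr1 (rises_of_path 0)); rewrite !path_of_risesK. Qed.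

Lemma dyck_path_of_rises u (ru : rises m 0 0 u) : dyck_path m (dyck_of_rises u).
Proof.
have /and3P[pr lr ar] := path_of_rises_lattice ru (leqnn 0).
by rewrite /dyck_path /dyck_of_rises eqxx pr lr; exact: ar.
Qed.

Lemma dyck_pathP p : dyck_path m p -> exists2 u, rises m 0 0 u & dyck_of_rises u = p.
Proof.
case: p => [|q r] //= /and4P[/eqP-> pr /eqP lr ar].
have [ru rK] := rises_of_lattice_path pr lr ar.
by exists (rises_of_path 0 r); rewrite // /dyck_of_rises rK.
Qed.

End DyckPaths.

Lemma last_scanl (T1 T2 : Type) (g : T1 -> T2 -> T1) x s :
  last x (scanl g x s) = foldl g x s.
Proof. by elim: s x => //= y s IH x; apply: IH. Qed.

Lemma path_scanl_maxn x a s : x <= a -> path leq x (scanl maxn a s).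
Proof. by elim: s x a => //= y s IH x a xa; rewrite (leq_trans xa (leq_maxl a y)) IH. Qed.

Lemma leq_foldl_maxn (s : seq nat) x : x \in s -> x <= foldl maxn 0 s.
Proof. by move=> xs; rewrite foldl_idx; apply: leq_bigmax_seq xs _. Qed.

Lemma foldl_maxn_leq (s : seq nat) t : {in s, forall x, x <= t} -> foldl maxn 0 s <= t.
Proof. by move=> st; rewrite foldl_idx; apply/bigmax_leqP_seq=> x xs _; apply: st. Qed.

Lemma uniq_size_foldl_maxn (s : seq nat) : uniq s -> size s <= (foldl maxn 0 s).+1.
Proof.
move=> us; rewrite -(size_iota 0 (foldl maxn 0 s).+1).
by apply: uniq_leq_size us _ => x /leq_foldl_maxn; rewrite mem_iota.
Qed.

Lemma uniq_perm_iota (w : seq nat) k :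
  uniq w -> size w = k -> {in w, forall x, x < k} -> perm_eq w (iota 0 k).
Proof.
move=> uw sw wk; apply: (uniq_perm uw (iota_uniq 0 k)).
by apply: (uniq_min_size uw _ _).2 => [x /wk|]; rewrite ?mem_iota ?size_iota ?sw.
Qed.

Lemma exists_fresh_foldl_maxn (w : seq nat) t :
  uniq w -> size w <= t -> foldl maxn 0 w <= t ->
  exists2 v, v \notin w & maxn (foldl maxn 0 w) v = t.
Proof.
move=> uw wt; rewrite leq_eqVlt => /orP[/eqP fw|ft].
  have /hasP[v] : has (fun v => v \notin w) (iota 0 t.+1).
    apply/negPn/hasPn=> all_in.
    have := uniq_leq_size (iota_uniq 0 t.+1) (fun x xi => negbNE (all_in x xi)).
    by rewrite size_iota ltnNge wt.
  rewrite mem_iota add0n ltnS => /andP[_ vt] vw.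
  by exists v => //; rewrite fw; apply/maxn_idPl.
exists t; last exact/maxn_idPr/ltnW.
by apply/negP=> /leq_foldl_maxn; rewrite leqNgt ft.
Qed.

(* Entry [j - 1] is [max (w_0, ..., w_j)]: for the ranks of a gene vector
   this is F(j). *)
Definition prefix_maxima (w : seq nat) : seq nat := behead (scanl maxn 0 w).

Lemma rises_prefix_maxima m w :
  perm_eq w (iota 0 m.+1) -> rises m 0 0 (prefix_maxima w).
Proof.
move=> pw; have uw : uniq w by rewrite (perm_uniq pw) iota_uniq.
have sw : size w = m.+1 by rewrite (perm_size pw) size_iota.
have wm x : x \in w -> x <= m by rewrite (perm_mem pw) mem_iota.
have fw : foldl maxn 0 w = m.
  apply/eqP; rewrite eqn_leq foldl_maxn_leq // -ltnS -sw uniq_size_foldl_maxn //.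
case: w pw uw sw wm fw => [//|w0 w] _ uw [sw] _ fw; rewrite /prefix_maxima /= max0n.
apply: (@rises_start0 _ w0); apply/risesP; split.
- exact: path_scanl_maxn.
- move=> i; rewrite size_scanl add0n => iw; rewrite nth_scanl //.
  have := uniq_size_foldl_maxn (take_uniq i.+2 uw).
  by rewrite /= max0n size_takel.
- by rewrite add0n size_scanl.
- by rewrite last_scanl -fw /= max0n.
Qed.

Lemma prefix_maxima_of_rises m u :
  rises m 0 0 u -> exists2 w, perm_eq w (iota 0 m.+1) & prefix_maxima w = u.
Proof.
case/risesP=> su lo; rewrite add0n => sz lu.
(* Greedily: append the new maximum when u increases, and otherwise an unused
   value below the current maximum. *)
have grow k : k <= m -> exists w, [/\ uniq w, size w = k.+1,
    scanl maxn 0 w = take k.+1 (0 :: u) & foldl maxn 0 w = nth 0 (0 :: u) k].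
  elim: k => [|k IH] km; first by exists [:: 0]; split; rewrite //= take0.
  have [w [uw sw scw fw]] := IH (ltnW km).
  have wt : size w <= nth 0 u k by rewrite sw; apply: lo; rewrite sz.
  have ft : foldl maxn 0 w <= nth 0 u k.
    rewrite fw; apply: (sorted_leq_nth leq_trans leqnn 0 su k k.+1);
      by rewrite // inE /= sz; lia.
  have [v vw fv] := exists_fresh_foldl_maxn uw wt ft.
  exists (rcons w v); split; rewrite ?rcons_uniq ?vw ?size_rcons ?sw ?foldl_rcons ?fv //.
  by rewrite scanl_rcons scw foldl_rcons fv [RHS](take_nth 0) //= sz.
have [w [uw sw scw fw]] := grow m (leqnn m).
exists w; last by rewrite /prefix_maxima scw take_oversize //= sz.
have fm : foldl maxn 0 w = m by rewrite fw -[in LHS]sz -last_nth lu.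
by apply: uniq_perm_iota => // x /leq_foldl_maxn; rewrite fm ltnS.
Qed.

Definition roadblock_set n (u : seq nat) : {set 'I_n * 'I_n} :=
  [set p : 'I_n * 'I_n | [&& 1 <= p.2, p.2 <= p.1 & p.1 < nth 0 u p.2.-1]].

(* Column j of [roadblock_set n u] is the interval j <= i < u_(j-1), and
   j <= u_(j-1) for rise sequences. *)
Definition roadblock_heights n (B : {set 'I_n * 'I_n}) : seq nat :=
  [seq maxn j (\max_(p in B | p.2 == j :> nat) p.1.+1) | j <- iota 1 n.-1].

Lemma roadblock_setK n u : rises n.-1 0 0 u -> roadblock_heights (roadblock_set n u) = u.
Proof.
move=> /[dup] /rises_le /allP um /risesP[_ lo sz _]; rewrite add0n in sz.
apply: (@eq_from_nth _ 0); rewrite size_map size_iota ?sz // => y yn.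
rewrite (nth_map 0) ?size_iota // nth_iota // add1n.
have yu : y < nth 0 u y by apply: lo; rewrite sz.
apply/eqP; rewrite eqn_leq geq_max yu; apply/andP; split.
  apply/bigmax_leqP=> -[i j] /andP[]; rewrite inE /= => /and3P[_ _ ij] /eqP jy.
  by move: ij; rewrite jy.
rewrite leq_max; case: leqP => //= lt_yu.
have uy : nth 0 u y <= n.-1 by apply: um; rewrite inE mem_nth ?orbT ?sz.
have un : (nth 0 u y).-1 < n by lia.
have yn' : y.+1 < n by lia.
pose p : 'I_n * 'I_n := (Ordinal un, Ordinal yn').
apply: (@leq_trans p.1.+1); first by rewrite /= prednK //; lia.
by apply: leq_bigmax_cond; rewrite inE /= eqxx andbT; lia.
Qed.

Lemma bigmax_succ (T : Type) a (t : seq T) (F : T -> nat) :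
  \max_(x <- a :: t) (F x).+1 = (\max_(x <- a :: t) F x).+1.
Proof.
elim: t a => [|b t IH] a; first by rewrite !big_seq1.
by rewrite big_cons IH maxnSS [in RHS]big_cons.
Qed.

Section GeneTrees.

Variables (X : finType) (s : #|X|.-tuple X).
Hypothesis s_uniq : uniq s.
Hypothesis X_gt0 : 0 < #|X|.

Definition ranks (g : seq X) : seq nat := [seq index x s | x <- g].

Lemma mem_species x : x \in s.
Proof.
have sub : {subset s <= enum X} by move=> y; rewrite mem_enum.
have le_size : size (enum X) <= size s by rewrite -cardE size_tuple.
by have [_ ->] := uniq_min_size s_uniq sub le_size; rewrite mem_enum.
Qed.

Lemma perm_ranks (g : #|X|.-tuple X) : uniq g -> perm_eq (ranks g) (iota 0 #|X|).
Proof.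
move=> ug; apply: uniq_perm_iota; rewrite ?size_map ?size_tuple //.
  by rewrite map_inj_in_uniq // => x y _ _; exact: index_inj (mem_species x) (mem_species y).
by move=> _ /mapP[x _ ->]; have := index_mem x s; rewrite size_tuple mem_species.
Qed.

Lemma Fmax_ranks (g : #|X|.-tuple X) j :
  j < #|X| -> Fmax s g j = nth 0 (scanl maxn 0 (ranks g)) j.
Proof.
move=> jX; rewrite nth_scanl ?size_map ?size_tuple // foldl_idx -map_take big_map.
have : size (take j.+1 g) = j.+1 by rewrite size_takel ?size_tuple.
by rewrite /Fmax /sigma; case: (take j.+1 g) => // a t _; rewrite bigmax_succ subn1.
Qed.

Lemma roadblock_ranks (g : #|X|.-tuple X) :
  roadblock g s = roadblock_set #|X| (prefix_maxima (ranks g)).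
Proof. by apply/setP=> -[i [[|j] jX]]; rewrite !inE //= nth_behead Fmax_ranks. Qed.

Lemma roadblock_setsP B :
  reflect (exists2 u, rises #|X|.-1 0 0 u & B = roadblock_set #|X| u)
          (B \in roadblock_sets s).
Proof.
rewrite inE; apply: (iffP existsP) => [[g /andP[ug /eqP->]]|[u ru ->]].
  exists (prefix_maxima (ranks g)); last exact: roadblock_ranks.
  by apply: rises_prefix_maxima; rewrite prednK // perm_ranks.
have [w pw wu] := prefix_maxima_of_rises ru; rewrite prednK // in pw.
have ws : {in w, forall a, a < size s} by move=> a; rewrite (perm_mem pw) mem_iota size_tuple.
pose x0 := tnth s (Ordinal X_gt0).
have sg : size (map (nth x0 s) w) == #|X| by rewrite size_map (perm_size pw) size_iota.
have rg : ranks (Tuple sg) = w.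
  by rewrite /ranks /= -map_comp map_id_in // => a aw /=; rewrite index_uniq ?ws.
exists (Tuple sg); rewrite /canon_vec roadblock_ranks rg wu eqxx andbT /=.
rewrite map_inj_in_uniq ?(perm_uniq pw) ?iota_uniq // => a b aw bw /eqP.
by rewrite nth_uniq ?ws // => /eqP.
Qed.

End GeneTrees.

Lemma card_roadblock_sets (X : finType) (s : #|X|.-tuple X) : 0 < #|X| -> uniq s ->
  #|roadblock_sets s| = size (rises_enum #|X|.-1 #|X|.-1 #|X|.-1).
Proof.
move=> X0 us; set m := #|X|.-1.
have memE u : (u \in rises_enum m m m) = rises m 0 0 u by rewrite mem_rises_enum ?subnn ?leqnn.
have -> : #|roadblock_sets s| = #|map (roadblock_set #|X|) (rises_enum m m m)|.
  apply: eq_card => B; apply/(roadblock_setsP us X0 _)/mapP=> -[u].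
    by exists u; rewrite ?memE.
  by rewrite memE; exists u.
rewrite -(size_map (roadblock_set #|X|)); apply/card_uniqP.
rewrite map_inj_in_uniq ?uniq_rises_enum ?leqnn // => u v.
rewrite !memE => ru rv /(congr1 (@roadblock_heights #|X|)).
by rewrite !roadblock_setK.
Qed.

Theorem proposition2 (X : finType) (s : #|X|.-tuple X) :
  2 <= #|X| -> canon_vec s ->
  (exists f : {set 'I_#|X| * 'I_#|X|} -> seq (nat * nat),
      {in roadblock_sets s &, injective f} /\
      (forall B, B \in roadblock_sets s -> dyck_path #|X|.-1 (f B)) /\
      (forall p, dyck_path #|X|.-1 p ->
         exists2 B, B \in roadblock_sets s & f B = p)) /\
  #|roadblock_sets s| = 'C((#|X|.-1).*2, #|X|.-1) %/ #|X|.
Proof.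
move=> /ltnW X0 us; set m := #|X|.-1.
pose f (B : {set 'I_#|X| * 'I_#|X|}) := dyck_of_rises m (roadblock_heights B).
have fK u : rises m 0 0 u -> f (roadblock_set #|X| u) = dyck_of_rises m u.
  by move=> ru; rewrite /f roadblock_setK.
split; last by rewrite card_roadblock_sets // size_rises_enum_diag prednK.
exists f; split; [|split].
- move=> _ _ /(roadblock_setsP us X0 _)[u ru ->] /(roadblock_setsP us X0 _)[v rv ->].
  by rewrite !fK // => /dyck_of_rises_inj ->.
- by move=> _ /(roadblock_setsP us X0 _)[u ru ->]; rewrite fK //; apply: dyck_path_of_rises.
- move=> p /dyck_pathP[u ru <-]; exists (roadblock_set #|X| u); last exact: fK.
  by apply/(roadblock_setsP us X0 _); exists u.
Qed.
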